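(* Suppose Assumptions 1 and 2 hold and run Algorithm 1 with any $\gamma,\alpha>0$. For every $t\in\{1,2,\ldots\}$, if $$\|\mathbf{Q}(t)\|>\gamma G+\frac{\alpha R^2+2DR+2\gamma^2G^2}{\gamma\epsilon},$$ then $\|\mathbf{Q}(t+1)\|<\|\mathbf{Q}(t)\|$.
   Context: Setting: $n,m$ positive integers; $\mathcal{X}_0\subset\mathbb{R}^n$ is a nonempty compact convex set; $\mathbf{g}=(g_1,\ldots,g_m)^{\mathsf T}:\mathbb{R}^n\to\mathbb{R}^m$ with each $g_k$ convex and continuous; $f^t$, $t=0,1,2,\ldots$, are convex differentiable real functions on (a neighborhood of) $\mathcal{X}_0$. All norms are Euclidean. Assumption 1: there are constants $D,\beta,G,R>0$ with $\|\nabla f^t(\mathbf{x})\|\le D$ for all $\mathbf{x}\in\mathcal{X}_0$ and all $t\ge0$; $\|\mathbf{g}(\mathbf{x})-\mathbf{g}(\mathbf{y})\|\le\beta\|\mathbf{x}-\mathbf{y}\|$ for all $\mathbf{x},\mathbf{y}\in\mathcal{X}_0$; $\|\mathbf{g}(\mathbf{x})\|\le G$ for all $\mathbf{x}\in\mathcal{X}_0$; $\|\mathbf{x}-\mathbf{y}\|\le R$ for all $\mathbf{x},\mathbf{y}\in\mathcal{X}_0$. Assumption 2 (Slater condition): there exist $\epsilon>0$ and $\hat{\mathbf{x}}\in\mathcal{X}_0$ with $g_k(\hat{\mathbf{x}})\le-\epsilon$ for all $k\in\{1,\ldots,m\}$. Algorithm 1 (parameters $\gamma>0,\alpha>0$):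 let $\tilde{\mathbf{g}}(\mathbf{x})=\gamma\mathbf{g}(\mathbf{x})$. Choose any $\mathbf{x}(0)\in\mathcal{X}_0$ and set $Q_k(0)=0$ for all $k$. For each $t=0,1,2,\ldots$: set $Q_k(t+1)=\max\{-\tilde g_k(\mathbf{x}(t)),\,Q_k(t)+\tilde g_k(\mathbf{x}(t))\}$ for $k=1,\ldots,m$, and let $\mathbf{x}(t+1)$ be a minimizer over $\mathbf{x}\in\mathcal{X}_0$ of $[\nabla f^t(\mathbf{x}(t))]^{\mathsf T}(\mathbf{x}-\mathbf{x}(t))+[\mathbf{Q}(t+1)+\tilde{\mathbf{g}}(\mathbf{x}(t))]^{\mathsf T}\tilde{\mathbf{g}}(\mathbf{x})+\alpha\|\mathbf{x}-\mathbf{x}(t)\|^2$, where $\mathbf{Q}(t)=(Q_1(t),\ldots,Q_m(t))^{\mathsf T}$. *)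

(* real numbers from Stdlib Reals.
   Vectors of R^n are represented as functions nat -> R, of which only the
   components 0..n-1 are relevant (all operations below only look at those). *)
From Stdlib Require Import Reals List.
Open Scope R_scope.

Definition vec := nat -> R.

Definition sumn (n : nat) (f : nat -> R) : R :=
  fold_right Rplus 0 (map f (seq 0 n)).

Definition vadd (x y : vec) : vec := fun i => x i + y i.
Definition vsub (x y : vec) : vec := fun i => x i - y i.
Definition vscal (a : R) (x : vec) : vec := fun i => a * x i.

Definition dot (n : nat) (x y : vec) : R := sumn n (fun i => x i * y i).
Definition norm (n : nat) (x : vec) : R := sqrt (dot n x x).

Definition is_open (n : nat) (U : vec -> Prop) : Prop :=
  forall x, U x -> exists r, 0 < r /\ forall y, norm n (vsub y x) < r -> U y.
Definition is_closed (n : nat) (S : vec -> Prop) : Prop :=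
  forall x, (forall r, 0 < r -> exists y, S y /\ norm n (vsub y x) < r) -> S x.
Definition is_bounded (n : nat) (S : vec -> Prop) : Prop :=
  exists M, forall x, S x -> norm n x <= M.
(* Heine-Borel: compact subsets of R^n are the closed bounded ones *)
Definition is_compact (n : nat) (S : vec -> Prop) : Prop :=
  is_closed n S /\ is_bounded n S.
Definition convex_set (S : vec -> Prop) : Prop :=
  forall x y l, S x -> S y -> 0 <= l <= 1 ->
    S (vadd (vscal l x) (vscal (1 - l) y)).
Definition convex_fun_on (S : vec -> Prop) (f : vec -> R) : Prop :=
  forall x y l, S x -> S y -> 0 <= l <= 1 ->
    f (vadd (vscal l x) (vscal (1 - l) y)) <= l * f x + (1 - l) * f y.

Definition continuous_Rn (n : nat) (f : vec -> R) : Prop :=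
  forall x eps, 0 < eps -> exists delta, 0 < delta /\
    forall y, norm n (vsub y x) < delta -> Rabs (f y - f x) < eps.

Definition has_gradient (n : nat) (f : vec -> R) (gr : vec) (x : vec) : Prop :=
  forall eps, 0 < eps -> exists delta, 0 < delta /\
    forall y, norm n (vsub y x) < delta ->
      Rabs (f y - f x - dot n gr (vsub y x)) <= eps * norm n (vsub y x).

Definition gvec (g : nat -> vec -> R) (x : vec) : vec := fun k => g k x.

(* Objective of the x-update of Algorithm 1 at step t:
   grad^T (x - x(t)) + (Q(t+1) + gt(x(t)))^T gt(x) + alpha ||x - x(t)||^2,
   with gt = gamma * g. *)
Definition alg1_obj (n m : nat) (gamma alpha : R) (g : nat -> vec -> R)
  (grad : vec) (xt : vec) (Qnext : vec) (x : vec) : R :=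
  dot n grad (vsub x xt)
  + dot m (vadd Qnext (vscal gamma (gvec g xt))) (vscal gamma (gvec g x))
  + alpha * (norm n (vsub x xt)) ^ 2.

From Stdlib Require Import Reals List Lra Psatz.
Open Scope R_scope.

(* Write q = Q(t), a = gamma g(x(t)), b = gamma g(x(t-1)) and p = q + b, which is
   componentwise nonnegative because t >= 1.  The queue update gives the drift bound
   ||Q(t+1)||^2 <= ||q||^2 + 2 (q.a + a.a), and q.a = p.a - b.a.  Comparing the value
   of the x-update objective at its minimiser x(t+1) with its value at the Slater
   point bounds p.a by D R + alpha R^2 - gamma eps sum_k p_k, and
   sum_k p_k >= ||p|| >= ||q|| - gamma G.  Under the hypothesis on ||q|| the drift is
   therefore negative. *)

Lemma sumn_O f : sumn 0 f = 0.
Proof. reflexivity. Qed.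

Lemma sumn_S n f : sumn (S n) f = sumn n f + f n.
Proof.
  unfold sumn. rewrite seq_S, map_app, fold_right_app. simpl.
  generalize (map f (seq 0 n)). intros l.
  induction l as [|y l IH]; simpl; [ring | rewrite IH; ring].
Qed.

Lemma sumn_ext n f h : (forall i, (i < n)%nat -> f i = h i) -> sumn n f = sumn n h.
Proof.
  induction n as [|n IH]; intros H; [reflexivity|].
  rewrite !sumn_S, IH, H; [reflexivity | lia | intros; apply H; lia].
Qed.

Lemma sumn_le n f h : (forall i, (i < n)%nat -> f i <= h i) -> sumn n f <= sumn n h.
Proof.
  induction n as [|n IH]; intros H; [apply Rle_refl|].
  rewrite !sumn_S. apply Rplus_le_compat; [apply IH; intros|]; apply H; lia.
Qed.

Lemma sumn_add n f h : sumn n (fun i => f i + h i) = sumn n f + sumn n h.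
Proof. induction n as [|n IH]; [rewrite !sumn_O; ring | rewrite !sumn_S, IH; ring]. Qed.

Lemma sumn_scal n c f : sumn n (fun i => c * f i) = c * sumn n f.
Proof. induction n as [|n IH]; [rewrite !sumn_O; ring | rewrite !sumn_S, IH; ring]. Qed.

Lemma sumn_nonneg n f : (forall i, (i < n)%nat -> 0 <= f i) -> 0 <= sumn n f.
Proof.
  induction n as [|n IH]; intros H; [rewrite sumn_O; apply Rle_refl|].
  rewrite sumn_S. apply Rplus_le_le_0_compat; [apply IH; intros|]; apply H; lia.
Qed.

Lemma dot_self_nonneg n u : 0 <= dot n u u.
Proof. apply sumn_nonneg. intros. apply Rle_0_sqr. Qed.

Lemma norm_nonneg n u : 0 <= norm n u.
Proof. apply sqrt_pos. Qed.

Lemma norm_pow2 n u : norm n u ^ 2 = dot n u u.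
Proof. unfold norm. rewrite pow2_sqrt; [reflexivity | apply dot_self_nonneg]. Qed.

Lemma norm_ext n u v : (forall i, (i < n)%nat -> u i = v i) -> norm n u = norm n v.
Proof. intros H. unfold norm, dot. f_equal. apply sumn_ext. intros i Hi. rewrite H; auto. Qed.

Lemma dot_comm n u v : dot n u v = dot n v u.
Proof. apply sumn_ext. intros; ring. Qed.

Lemma dot_vadd_l n u v w : dot n (vadd u v) w = dot n u w + dot n v w.
Proof. unfold dot. rewrite <- sumn_add. apply sumn_ext. intros; unfold vadd; ring. Qed.

Lemma dot_vsub_r n u v w : dot n u (vsub v w) = dot n u v - dot n u w.
Proof.
  unfold dot.
  rewrite (sumn_ext n _ (fun i => u i * v i + (-1) * (u i * w i))) by (intros; unfold vsub; ring).
  rewrite sumn_add, sumn_scal. ring.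
Qed.

Lemma dot_pow2_le n u v : dot n u v ^ 2 <= dot n u u * dot n v v.
Proof.
  unfold dot. induction n as [|n IH]; [rewrite !sumn_O; lra|].
  rewrite !sumn_S.
  set (S := sumn n (fun i => u i * v i)) in *.
  set (A := sumn n (fun i => u i * u i)) in *.
  set (B := sumn n (fun i => v i * v i)) in *.
  assert (HA : 0 <= A) by apply dot_self_nonneg.
  assert (HB : 0 <= B) by apply dot_self_nonneg.
  (* |S| <= sqrt (A B), so 2 S x y <= 2 sqrt (A y^2) sqrt (B x^2) <= A y^2 + B x^2 *)
  assert (Hcross : 2 * S * (u n * v n) <= A * (v n * v n) + B * (u n * u n)).
  { assert (0 <= A * (v n * v n) + B * (u n * u n)) by nra.
    assert (4 * S ^ 2 * (u n * v n) ^ 2 <= (A * (v n * v n) + B * (u n * u n)) ^ 2).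
    { assert (4 * S ^ 2 * (u n * v n) ^ 2 <= 4 * (A * B) * (u n * v n) ^ 2)
        by (apply Rmult_le_compat_r; nra).
      pose proof (pow2_ge_0 (A * (v n * v n) - B * (u n * u n))). nra. }
    nra. }
  nra.
Qed.

Lemma Rabs_dot_le n u v : Rabs (dot n u v) <= norm n u * norm n v.
Proof.
  unfold norm. rewrite <- sqrt_mult by apply dot_self_nonneg.
  rewrite <- sqrt_Rsqr_abs. apply sqrt_le_1_alt.
  pose proof (dot_pow2_le n u v). unfold Rsqr. lra.
Qed.

Lemma norm_vscal n c u : norm n (vscal c u) = Rabs c * norm n u.
Proof.
  unfold norm, dot, vscal.
  rewrite (sumn_ext n _ (fun i => (c * c) * (u i * u i))) by (intros; ring).
  rewrite sumn_scal, sqrt_mult by (apply Rle_0_sqr || apply dot_self_nonneg).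
  rewrite <- sqrt_Rsqr_abs. reflexivity.
Qed.

Lemma norm_vadd_le n u v : norm n (vadd u v) <= norm n u + norm n v.
Proof.
  assert (E : dot n (vadd u v) (vadd u v) = dot n u u + 2 * dot n u v + dot n v v).
  { rewrite !dot_vadd_l, (dot_comm n u), (dot_comm n v), !dot_vadd_l, (dot_comm n v u). ring. }
  pose proof (Rle_abs (dot n u v)). pose proof (Rabs_dot_le n u v).
  pose proof (norm_pow2 n u). pose proof (norm_pow2 n v). pose proof (norm_pow2 n (vadd u v)).
  pose proof (norm_nonneg n u). pose proof (norm_nonneg n v). pose proof (norm_nonneg n (vadd u v)).
  nra.
Qed.

Lemma norm_sub_le_norm_vadd n u v : norm n u - norm n v <= norm n (vadd u v).
Proof.
  rewrite (norm_ext n u (vadd (vadd u v) (vscal (-1) v))) by (intros; unfold vadd, vscal; ring).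
  pose proof (norm_vadd_le n (vadd u v) (vscal (-1) v)).
  rewrite norm_vscal, Rabs_left in H by lra. lra.
Qed.

Lemma norm_le_sumn n u : (forall i, (i < n)%nat -> 0 <= u i) -> norm n u <= sumn n u.
Proof.
  intros H.
  assert (Hsq : 0 <= sumn n u /\ dot n u u <= sumn n u ^ 2).
  { unfold dot. induction n as [|n IH]; [rewrite !sumn_O; lra|].
    destruct IH as [IH1 IH2]; [intros; apply H; lia|].
    assert (0 <= u n) by (apply H; lia).
    rewrite !sumn_S. split; nra. }
  destruct Hsq as [Hpos Hsq]. unfold norm.
  rewrite <- (sqrt_pow2 (sumn n u)) by exact Hpos. apply sqrt_le_1_alt, Hsq.
Qed.

Lemma Rmax_pow2_le a b : Rmax a b ^ 2 <= a ^ 2 + b ^ 2.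
Proof. unfold Rmax. destruct Rle_dec; nra. Qed.

Lemma queue_update_drift m (q a q' : vec) :
  (forall k, (k < m)%nat -> q' k = Rmax (- a k) (q k + a k)) ->
  dot m q' q' <= dot m q q + 2 * dot m q a + 2 * dot m a a.
Proof.
  intros Hq'. unfold dot. rewrite <- !sumn_scal, <- !sumn_add.
  apply sumn_le. intros k Hk. rewrite Hq' by exact Hk.
  pose proof (Rmax_pow2_le (- a k) (q k + a k)). nra.
Qed.

Lemma alg1_obj_min_bound n m gamma alpha g grad (xt x1 z qn : vec) D R0 :
  0 <= alpha -> norm n grad <= D ->
  norm n (vsub z x1) <= R0 -> norm n (vsub z xt) <= R0 ->
  alg1_obj n m gamma alpha g grad xt qn x1 <= alg1_obj n m gamma alpha g grad xt qn z ->
  dot m (vadd qn (vscal gamma (gvec g xt))) (vscal gamma (gvec g x1))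
    <= D * R0 + alpha * R0 ^ 2
       + dot m (vadd qn (vscal gamma (gvec g xt))) (vscal gamma (gvec g z)).
Proof.
  intros Halpha Hgrad Hz1 Hzt Hmin. unfold alg1_obj in Hmin.
  assert (Hlin : dot n grad (vsub z x1) <= D * R0).
  { pose proof (Rle_abs (dot n grad (vsub z x1))). pose proof (Rabs_dot_le n grad (vsub z x1)).
    pose proof (norm_nonneg n grad). pose proof (norm_nonneg n (vsub z x1)). nra. }
  assert (Hprox : alpha * norm n (vsub z xt) ^ 2 <= alpha * R0 ^ 2).
  { pose proof (norm_nonneg n (vsub z xt)). apply Rmult_le_compat_l; nra. }
  pose proof (norm_nonneg n (vsub x1 xt)).
  assert (0 <= alpha * norm n (vsub x1 xt) ^ 2) by nra.
  rewrite dot_vsub_r in Hlin. rewrite !dot_vsub_r in Hmin. lra.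
Qed.

Lemma dot_slater_le m gamma eps g (xhat p : vec) :
  0 <= gamma -> (forall k, (k < m)%nat -> 0 <= p k) ->
  (forall k, (k < m)%nat -> g k xhat <= - eps) ->
  dot m p (vscal gamma (gvec g xhat)) <= - (gamma * eps) * sumn m p.
Proof.
  intros Hgamma Hp Hslater. unfold dot. rewrite <- sumn_scal.
  apply sumn_le. intros k Hk. unfold vscal, gvec.
  pose proof (Hp k Hk). pose proof (Hslater k Hk).
  assert (gamma * g k xhat <= gamma * - eps) by (apply Rmult_le_compat_l; lra). nra.
Qed.

Lemma queue_step_norm_lt n m g grad D G R0 eps gamma alpha (xs x1 xhat qprev q q' : vec) :
  0 < gamma -> 0 < eps -> 0 <= alpha -> norm n grad <= D ->
  norm m (gvec g xs) <= G -> norm m (gvec g x1) <= G ->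
  norm n (vsub xhat x1) <= R0 -> norm n (vsub xhat xs) <= R0 ->
  (forall k, (k < m)%nat -> g k xhat <= - eps) ->
  (forall k, (k < m)%nat -> q k = Rmax (- (gamma * g k xs)) (qprev k + gamma * g k xs)) ->
  (forall k, (k < m)%nat -> q' k = Rmax (- (gamma * g k x1)) (q k + gamma * g k x1)) ->
  alg1_obj n m gamma alpha g grad xs q x1 <= alg1_obj n m gamma alpha g grad xs q xhat ->
  norm m q > gamma * G
    + (alpha * R0 ^ 2 + 2 * D * R0 + 2 * gamma ^ 2 * G ^ 2) / (gamma * eps) ->
  norm m q' < norm m q.
Proof.
  intros Hgamma Heps Halpha Hgrad Hgs Hg1 Hz1 Hzs Hslater Hq Hq' Hmin Hlarge.
  set (b := vscal gamma (gvec g xs)) in *.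
  set (a := vscal gamma (gvec g x1)) in *.
  set (p := vadd q b).
  assert (Hp : forall k, (k < m)%nat -> 0 <= p k).
  { intros k Hk. unfold p, vadd, b, vscal, gvec. rewrite Hq by exact Hk.
    pose proof (Rmax_l (- (gamma * g k xs)) (qprev k + gamma * g k xs)). lra. }
  assert (Hscaled : forall y, norm m (gvec g y) <= G -> norm m (vscal gamma (gvec g y)) <= gamma * G).
  { intros y Hy. rewrite norm_vscal, Rabs_pos_eq by lra. apply Rmult_le_compat_l; lra. }
  assert (Hb : norm m b <= gamma * G) by (apply Hscaled, Hgs).
  assert (Ha : norm m a <= gamma * G) by (apply Hscaled, Hg1).
  pose proof (queue_update_drift m q a q' Hq') as Hdrift.
  pose proof (alg1_obj_min_bound n m gamma alpha g grad xs x1 xhat q D R0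
                Halpha Hgrad Hz1 Hzs Hmin) as Hpa.
  fold b a p in Hpa.
  pose proof (dot_slater_le m gamma eps g xhat p ltac:(lra) Hp Hslater) as Hph.
  assert (Hsum : norm m q - gamma * G <= sumn m p).
  { pose proof (norm_sub_le_norm_vadd m q b). pose proof (norm_le_sumn m p Hp). unfold p in *. lra. }
  assert (Haa : dot m a a <= (gamma * G) ^ 2).
  { rewrite <- norm_pow2. pose proof (norm_nonneg m a). nra. }
  assert (Hba : - dot m b a <= (gamma * G) ^ 2).
  { pose proof (Rabs_dot_le m b a). pose proof (Rle_abs (- dot m b a)). rewrite Rabs_Ropp in *.
    pose proof (norm_nonneg m a). pose proof (norm_nonneg m b). nra. }
  assert (Hqa : dot m q a = dot m p a - dot m b a) by (unfold p; rewrite dot_vadd_l; ring).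
  assert (HDR : 0 <= D * R0).
  { pose proof (norm_nonneg n grad). pose proof (norm_nonneg n (vsub xhat x1)). nra. }
  set (C := alpha * R0 ^ 2 + 2 * D * R0 + 2 * gamma ^ 2 * G ^ 2) in *.
  assert (Hmargin : C < gamma * eps * (norm m q - gamma * G)).
  { assert (0 < gamma * eps) by nra.
    replace C with (gamma * eps * (C / (gamma * eps))) by (field; lra).
    apply Rmult_lt_compat_l; lra. }
  assert (Hsum' : gamma * eps * (norm m q - gamma * G) <= gamma * eps * sumn m p)
    by (apply Rmult_le_compat_l; nra).
  unfold C in Hmargin. unfold norm. apply sqrt_lt_1_alt. split; [apply dot_self_nonneg|]. lra.
Qed.

Theorem lemma9
  (n m : nat) (Hn : (0 < n)%nat) (Hm : (0 < m)%nat)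
  (X0 : vec -> Prop)
  (HX0ne : exists x, X0 x) (HX0c : is_compact n X0) (HX0cv : convex_set X0)
  (g : nat -> vec -> R)
  (Hgconv : forall k, (k < m)%nat -> convex_fun_on (fun _ => True) (g k))
  (Hgcont : forall k, (k < m)%nat -> continuous_Rn n (g k))
  (f : nat -> vec -> R) (gradf : nat -> vec -> vec)
  (Hfdiff : forall t, exists U, is_open n U /\ (forall x, X0 x -> U x) /\
              forall x, U x -> has_gradient n (f t) (gradf t x) x)
  (Hfconv : forall t, convex_fun_on X0 (f t))
  (* Assumption 1 *)
  (D beta G R0 : R) (HD : 0 < D) (Hbeta : 0 < beta) (HG : 0 < G) (HR : 0 < R0)
  (HgradD : forall t x, X0 x -> norm n (gradf t x) <= D)
  (Hlip : forall x y, X0 x -> X0 y ->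
            norm m (vsub (gvec g x) (gvec g y)) <= beta * norm n (vsub x y))
  (HgG : forall x, X0 x -> norm m (gvec g x) <= G)
  (Hdiam : forall x y, X0 x -> X0 y -> norm n (vsub x y) <= R0)
  (* Assumption 2 (Slater) *)
  (eps : R) (Heps : 0 < eps) (xhat : vec) (Hxhat : X0 xhat)
  (Hslater : forall k, (k < m)%nat -> g k xhat <= - eps)
  (* Algorithm 1 *)
  (gamma alpha : R) (Hgamma : 0 < gamma) (Halpha : 0 < alpha)
  (x Q : nat -> vec)
  (Hx0 : X0 (x 0%nat))
  (HQ0 : forall k, (k < m)%nat -> Q 0%nat k = 0)
  (HQ : forall t k, (k < m)%nat ->
          Q (S t) k = Rmax (- (gamma * g k (x t))) (Q t k + gamma * g k (x t)))
  (Hxin : forall t, X0 (x (S t)))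
  (Hxmin : forall t z, X0 z ->
     alg1_obj n m gamma alpha g (gradf t (x t)) (x t) (Q (S t)) (x (S t))
     <= alg1_obj n m gamma alpha g (gradf t (x t)) (x t) (Q (S t)) z)
  (t : nat) (Ht : (1 <= t)%nat) :
  norm m (Q t) > gamma * G
    + (alpha * R0 ^ 2 + 2 * D * R0 + 2 * gamma ^ 2 * G ^ 2) / (gamma * eps) ->
  norm m (Q (S t)) < norm m (Q t).
Proof.
  destruct t as [|s]; [lia|].
  assert (Hxs : X0 (x s)) by (destruct s; auto).
  apply (queue_step_norm_lt n m g (gradf s (x s)) D G R0 eps gamma alpha
           (x s) (x (S s)) xhat (Q s)); auto; lra.
Qed.
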